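(* Let $R_{\max}$ be the relation ''is bisimilar to'' on the state space $E$ of a Feller-Dynkin process, i.e. $R_{\max}=\bigcup\{R : R \text{ is a bisimulation on } E\}$. Then $R_{\max}$ is a bisimulation, and hence it is the greatest bisimulation on $E$.
   Context: Let $E$ be a locally compact Hausdorff space with countable base, equipped with its Borel $\sigma$-algebra $\mathcal{E}$, and let $E_\partial = E \uplus \{\partial\}$ be its one-point compactification. A Feller-Dynkin semigroup is a strongly continuous semigroup $(\hat P_t)_{t\ge 0}$ of linear operators on $C_0(E)$ such that $0\le f\le 1$ implies $0\le \hat P_t f\le 1$; it determines sub-Markov kernels $P_t$ on $E$ with $\hat P_t f(x)=\int f(y)P_t(x,dy)$. A trajectory is a cadlag map $\omega:[0,\infty)\to E_\partial$ such that if $\omega(t-)=\partial$ or $\omega(t)=\partial$ then $\omega(u)=\partial$ for all $u\ge t$. Let $\Omega$ be the set of trajectories, $X_t(\omega)=\omega(t)$, $\mathcal{G}=\sigma(X_s : s\ge 0)$, and for $x\in E_\partial$ let $\mathbb{P}^x$ be the unique probability measure on $(\Omega,\mathcal{G})$ with $\mathbb{P}^x(X_0\in dx_0, X_{t_1}\in dx_1,\dots,X_{t_n}\in dx_n)=\delta_x(dx_0)P^{+\partial}_{t_1}(x_0,dx_1)\cdots P^{+\partial}_{t_n-t_{n-1}}(x_{n-1},dx_n)$ for all $0\le t_1\le\dots\le t_n$, where $P^{+\partial}_t(x,\{\partial\})=1-P_t(x,E)$ and $P^{+\partial}_t(\partial,\{\partial\})=1$. The process is equipped with $obs:E\to 2^{AP}$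 for a finite set $AP$ of atomic propositions, extended by $obs(\partial)=\partial$. An equivalence relation $R$ on $E$ is a bisimulation if whenever $x\,R\,y$: (i) $obs(x)=obs(y)$, and (ii) for every $R$-closed set $B\in\mathcal{G}$, $\mathbb{P}^x(B)=\mathbb{P}^y(B)$, where $B$ is $R$-closed if for every $\omega\in B$ and every trajectory $\omega'$ with $\omega(t)\,R\,\omega'(t)$ for all $t\ge 0$ ($\partial$ related to itself), $\omega'\in B$. Two states are bisimilar if some bisimulation relates them. *)

From HB Require Import structures.
From mathcomp Require Import all_boot all_order all_algebra.
From mathcomp Require Import all_classical all_reals all_analysis.
Set Implicit Arguments. Unset Strict Implicit. Unset Printing Implicit Defensive.
Import Order.TTheory GRing.Theory Num.Theory.
Import numFieldNormedType.Exports.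
Local Open Scope classical_set_scope.
Local Open Scope ring_scope.

(** E_partial = E + {partial}, with partial = None, topologized as the one-point compactification *)
Notation opc E := (one_point_compactification E).

Definition borel (T : ptopologicalType) := g_sigma_algebraType (@open T).
Definition borel_sets (T : topologicalType) : set (set T) := <<s @open T >>.

Definition C0 (R : realType) (E : topologicalType) : set (E -> R) :=
  [set f | continuous f /\
     forall e : R, 0 < e -> exists K : set E, compact K /\
        forall x, ~ K x -> `|f x| < e].

Definition feller_dynkin_semigroup (R : realType) (E : topologicalType)
  (Ph : R -> (E -> R) -> (E -> R)) : Prop :=
  (forall t f, 0 <= t -> C0 f -> C0 (Ph t f)) /\
  [/\
      (forall t (a : R) f g, 0 <= t -> C0 f -> C0 g ->
          Ph t (fun x => a * f x + g x) = (fun x => a * Ph t f x + Ph t g x)),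
      (forall f, C0 f -> Ph 0 f = f),
      (forall s t f, 0 <= s -> 0 <= t -> C0 f -> Ph (s + t) f = Ph s (Ph t f)),
      (forall f, C0 f -> forall e : R, 0 < e -> exists d : R, 0 < d /\
          forall t, 0 < t < d -> forall x, `|Ph t f x - f x| <= e) &
      (forall t f, 0 <= t -> C0 f -> (forall x, 0 <= f x <= 1) ->
          forall x, 0 <= Ph t f x <= 1)].

Definition kernels_of (R : realType) (E : ptopologicalType)
  (Ph : R -> (E -> R) -> (E -> R))
  (P : R -> R.-spker (borel E) ~> (borel E)) : Prop :=
  forall t f x, 0 <= t -> C0 f ->
    ((Ph t f x)%:E = \int[P t x]_y (f (y : borel E))%:E)%E.

(** Integral of g : E_partial -> \bar R against P^{+partial}_t(x, .),
    where P^{+partial}_t(x, A) = P_t(x, A cap E) + (1 - P_t(x,E)) 1_A(partial)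
    and P^{+partial}_t(partial, .) = dirac partial. *)
Definition pd_int (R : realType) (E : ptopologicalType)
  (P : R -> R.-spker (borel E) ~> (borel E)) (t : R) (x : opc E)
  (g : opc E -> \bar R) : \bar R :=
  match x with
  | Some x' => (\int[P t x']_y g (Some (y : borel E))
                + (1 - P t x' [set: borel E]) * g None)%E
  | None => g None
  end.

(** iterated integral  int_{A_1} P^{+}_{t_1 - t_0}(x, dx_1) ... int_{A_n} P^{+}_{t_n - t_{n-1}}(x_{n-1}, dx_n) 1
    for l = [(t_1,A_1); ...; (t_n,A_n)] and t_0 = prev *)
Fixpoint fdd_rhs (R : realType) (E : ptopologicalType)
  (P : R -> R.-spker (borel E) ~> (borel E)) (prev : R)
  (l : seq (R * set (opc E))) (x : opc E) {struct l} : \bar R :=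
  match l with
  | [::] => 1%E
  | (t, A) :: l' =>
      pd_int P (t - prev) x (fun y => ((\1_A y)%:E * fdd_rhs P t l' y)%E)
  end.

(** trajectories: cadlag maps [0,oo) -> E_partial, absorbed at partial.
    Time is represented by R; values at negative times are fixed to w 0
    (so these functions are in bijection with maps defined on [0,oo)). *)
Definition is_trajectory (R : realType) (E : topologicalType)
  (w : R -> opc E) : Prop :=
  [/\ (forall t, t < 0 -> w t = w 0),
      (forall t, 0 <= t -> w @ at_right t --> w t),
      (forall t, 0 < t -> exists l : opc E, w @ at_left t --> l) &
      (forall t, 0 <= t ->
         (w t = None \/ (0 < t /\ w @ at_left t --> (None : opc E))) ->
         forall u, t <= u -> w u = None)].

Record traj (R : realType) (E : topologicalType) := Traj {
  traj_fun :> R -> opc E ;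
  traj_prop : is_trajectory traj_fun }.

Lemma is_trajectory_none (R : realType) (E : topologicalType) :
  is_trajectory (fun _ : R => (None : opc E)).
Proof.
split => //.
- by move=> t _; exact: cvg_cst.
- by move=> t _; exists None; exact: cvg_cst.
Qed.

HB.instance Definition _ (R : realType) (E : topologicalType) :=
  gen_eqMixin (traj R E).
HB.instance Definition _ (R : realType) (E : topologicalType) :=
  gen_choiceMixin (traj R E).
HB.instance Definition _ (R : realType) (E : topologicalType) :=
  isPointed.Build (traj R E) (Traj (@is_trajectory_none R E)).

Definition traj_gen (R : realType) (E : topologicalType) : set (set (traj R E)) :=
  [set B | exists (s : R) (A : set (opc E)),
      [/\ 0 <= s, borel_sets A & B = (fun w : traj R E => w s) @^-1` A]].

Definition Omega (R : realType) (E : topologicalType) :=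
  g_sigma_algebraType (@traj_gen R E).

(** P^x is the law of the process started at x: finite dimensional distributions *)
Definition process_law (R : realType) (E : ptopologicalType)
  (P : R -> R.-spker (borel E) ~> (borel E))
  (Px : opc E -> probability (Omega R E) R) : Prop :=
  forall (x : opc E) (A0 : set (opc E)) (l : seq (R * set (opc E))),
    borel_sets A0 ->
    (forall p, p \in l -> borel_sets p.2) ->
    path (fun p q : R * set (opc E) => p.1 <= q.1) (0, A0) l ->
    Px x ([set w : Omega R E | A0 (w 0)] `&`
          foldr (fun p S => [set w : Omega R E | p.2 (w p.1)] `&` S) setT l)
    = ((\1_A0 x)%:E * fdd_rhs P 0 l x)%E.

Definition rel_lift (E : Type) (Rl : E -> E -> Prop) (a b : option E) : Prop :=
  match a, b with
  | Some a', Some b' => Rl a' b'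
  | None, None => True
  | _, _ => False
  end.

Definition R_closed (R : realType) (E : topologicalType)
  (Rl : E -> E -> Prop) (B : set (Omega R E)) : Prop :=
  forall w w' : Omega R E, B w ->
    (forall t, 0 <= t -> rel_lift Rl (w t) (w' t)) -> B w'.

Definition equivalence_rel (E : Type) (Rl : E -> E -> Prop) : Prop :=
  [/\ (forall x, Rl x x), (forall x y, Rl x y -> Rl y x) &
      (forall x y z, Rl x y -> Rl y z -> Rl x z)].

Definition bisimulation (R : realType) (E : topologicalType) (AP : finType)
  (obs : E -> {set AP}) (Px : opc E -> probability (Omega R E) R)
  (Rl : E -> E -> Prop) : Prop :=
  equivalence_rel Rl /\
  forall x y, Rl x y ->
    obs x = obs y /\
    forall B : set (Omega R E), measurable B -> R_closed Rl B ->
      Px (Some x) B = Px (Some y) B.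

Definition bisimilar (R : realType) (E : topologicalType) (AP : finType)
  (obs : E -> {set AP}) (Px : opc E -> probability (Omega R E) R) (x y : E) : Prop :=
  exists Rl, bisimulation obs Px Rl /\ Rl x y.

(** Bisimilarity is the union of all bisimulations; let [S] be the equivalence
    closure of that union.  If a bisimulation [Rl] is contained in [S], every
    [S]-closed event is [Rl]-closed, so two [Rl]-related states agree on their
    observation and on the probability of every [S]-closed event.  Agreement
    of this kind is itself an equivalence relation, hence it propagates along
    [S]: so [S] is a bisimulation, and therefore coincides with bisimilarity.
    Nothing about the Feller-Dynkin structure is used beyond the laws [Px]. *)

From HB Require Import structures.
From mathcomp Require Import all_boot all_order all_algebra.
From mathcomp Require Import all_classical all_reals all_analysis.
From Stdlib Require Import Relations.
Import Order.TTheory GRing.Theory Num.Theory.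
Local Open Scope classical_set_scope.
Local Open Scope ring_scope.

Section Bisimilarity.

Variables (R : realType) (E : topologicalType) (AP : finType).
Variables (obs : E -> {set AP}) (Px : opc E -> probability (Omega R E) R).

Lemma R_closed_subrel (R1 R2 : E -> E -> Prop) (B : set (Omega R E)) :
  (forall a b, R1 a b -> R2 a b) -> R_closed R2 B -> R_closed R1 B.
Proof.
move=> R12 closedB w w' Bw ww'; apply: (closedB w w' Bw) => t t0.
by have := ww' t t0; case: (w t) => [a|]; case: (w' t) => [b|] //; exact: R12.
Qed.

Definition indistinguishable (S : E -> E -> Prop) (x y : E) : Prop :=
  obs x = obs y /\
  forall B : set (Omega R E), measurable B -> R_closed S B ->
    Px (Some x) B = Px (Some y) B.

Lemma indistinguishable_equivalence (S : E -> E -> Prop) :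
  equivalence_rel (indistinguishable S).
Proof.
split=> [x | x y [oxy pxy] | x y z [oxy pxy] [oyz pyz]] //.
- by split=> // B mB cB; rewrite pxy.
- by split=> [|B mB cB]; [rewrite oxy | rewrite pxy // pyz].
Qed.

Lemma bisimulation_indistinguishable (Rl S : E -> E -> Prop) :
  bisimulation obs Px Rl -> (forall x y, Rl x y -> S x y) ->
  forall x y, Rl x y -> indistinguishable S x y.
Proof.
move=> [_ bisRl] RlS x y xy; have [oxy pxy] := bisRl _ _ xy.
by split=> // B mB cB; apply: pxy => //; exact: R_closed_subrel cB.
Qed.

Lemma bisimulation_equiv_closure (F : set (E -> E -> Prop)) :
  (forall Rl, F Rl -> bisimulation obs Px Rl) ->
  bisimulation obs Px
    (clos_refl_sym_trans E (fun x y => exists2 Rl, F Rl & Rl x y)).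
Proof.
move=> bisF; set S := clos_refl_sym_trans E _.
have [reflS transS symS] := clos_rst_is_equiv E
  (fun x y => exists2 Rl, F Rl & Rl x y).
split; first by split=> [x|x y|x y z]; [exact: reflS|exact: symS|exact: transS].
have [refl_ind sym_ind trans_ind] := indistinguishable_equivalence S.
move=> x y; elim=> {x y}
  [x y [Rl FRl xy] | x | x y _ ind_xy | x y z _ ind_xy _ ind_yz].
- have RlS a b : Rl a b -> S a b by move=> ab; apply: rst_step; exists Rl.
  exact: bisimulation_indistinguishable (bisF _ FRl) RlS _ _ xy.
- exact: refl_ind.
- exact: sym_ind.
- exact: trans_ind ind_yz.
Qed.

End Bisimilarity.

Theorem mainTheorem2 (R : realType) (E : ptopologicalType)
  (hausE : hausdorff_space E) (lcE : locally_compact [set: E])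
  (scE : @second_countable E)
  (Ph : R -> (E -> R) -> (E -> R)) (hPh : feller_dynkin_semigroup Ph)
  (P : R -> R.-spker (borel E) ~> (borel E)) (hP : kernels_of Ph P)
  (Px : opc E -> probability (Omega R E) R) (hPx : process_law P Px)
  (AP : finType) (obs : E -> {set AP}) :
  bisimulation obs Px (bisimilar obs Px) /\
  (forall Rl, bisimulation obs Px Rl ->
     forall x y, Rl x y -> bisimilar obs Px x y).
Proof.
set S := clos_refl_sym_trans E
  (fun x y => exists2 Rl, bisimulation obs Px Rl & Rl x y).
have bisS : bisimulation obs Px S by exact: bisimulation_equiv_closure.
have -> : bisimilar obs Px = S.
  apply/funext=> x; apply/funext=> y; apply/propext; split.
  - by move=> [Rl [bisRl xy]]; apply: rst_step; exists Rl.
  - by move=> xy; exists S.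
split=> // Rl bisRl x y xy.
by apply: rst_step; exists Rl.
Qed.
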